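(* Let $n\geq2$ and $\sigma>0$. For $b>0$ let $C^1_0([b,\infty))$ be the Banach space of $C^1$ functions $v:[b,\infty)\to\mathbb{R}$ with $v(x)\to0$ and $v'(x)\to0$ as $x\to+\infty$, with norm $\|v\|_{C^1}=\sup_{[b,\infty)}|v|+\sup_{[b,\infty)}|v'|$, and let $$Y_{\sigma,b}=\Big\{v\in C^1_0([b,\infty)) : v(x)>0,\ |v'(x)|<\frac{4(n-1)}{\sigma x^2}\ \text{for all }x\geq b\Big\}.$$ Define for $v\in Y_{\sigma,b}$ and $x\geq b$ $$[T_\sigma v](x)=2(n-1)x\int_x^\infty\frac{1}{t^2}\bigg\{\int_t^\infty\frac{1+(v'(s)+\sigma)^2}{v(s)+\sigma s}\,\frac{s}{2}\,e^{-\int_t^s\frac{z}{2}(1+(v'(z)+\sigma)^2)\,dz}\,ds\bigg\}dt.$$ Then there exists $b_0=b_0(n,\sigma)$ such that for every $b\geq b_0$, $T_\sigma$ is a contraction on $Y_{\sigma,b}$ for the norm $\|\cdot\|_{C^1}$, i.e. there is $\tau\in(0,1)$ with $\|T_\sigma v_2-T_\sigma v_1\|_{C^1}\leq\tau\|v_2-v_1\|_{C^1}$ for all $v_1,v_2\in Y_{\sigma,b}$. *)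

From Stdlib Require Import Reals.
From Coquelicot Require Import Coquelicot.
Open Scope R_scope.

(* v is C^1 on [b, +oo).  Functions are R -> R; only their restriction to
   [b,+oo) matters.  We ask for (two-sided) differentiability at every
   x >= b with Derive v continuous at every x >= b; every C^1 function on
   the closed half-line is the restriction of such a function (C^1
   extension to the left of b), so this is the same class of restrictions. *)
Definition C1_on (b : R) (v : R -> R) : Prop :=
  (forall x, b <= x -> ex_derive v x) /\
  (forall x, b <= x -> continuous (Derive v) x).

Definition C10 (b : R) (v : R -> R) : Prop :=
  C1_on b v /\ is_lim v p_infty 0 /\ is_lim (Derive v) p_infty 0.

Definition Yset (n : nat) (sigma b : R) (v : R -> R) : Prop :=
  C10 b v /\
  (forall x, b <= x -> 0 < v x) /\
  (forall x, b <= x -> Rabs (Derive v x) < 4 * (INR n - 1) / (sigma * x ^ 2)).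

(* C^1 sup norm on [b,+oo), valued in Rbar (+oo if unbounded).
   The sup of |w'| is taken over (b,+oo); for a C^1 function on [b,+oo)
   it coincides with the sup over [b,+oo) by continuity of w'. *)
Definition C1norm (b : R) (w : R -> R) : Rbar :=
  Rbar_plus (Lub_Rbar (fun y => exists x, b <= x /\ y = Rabs (w x)))
            (Lub_Rbar (fun y => exists x, b < x /\ y = Rabs (Derive w x))).

Definition Tsig (n : nat) (sigma : R) (v : R -> R) (x : R) : R :=
  2 * (INR n - 1) * x *
  RInt_gen (fun t =>
     / t ^ 2 *
     RInt_gen (fun s =>
        (1 + (Derive v s + sigma) ^ 2) / (v s + sigma * s) * (s / 2) *
        exp (- RInt (fun z => z / 2 * (1 + (Derive v z + sigma) ^ 2)) t s))
       (at_point t) (Rbar_locally p_infty))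
    (at_point x) (Rbar_locally p_infty).

From Stdlib Require Import Reals Lra Psatz.
From Coquelicot Require Import Coquelicot.
Open Scope R_scope.

(* Write the inner integrand of [T_sigma v] as [w(s) exp (- Phi (t, s))], where
   [Phi (t, s) = int_t^s z/2 (1 + (v' z + sigma)^2) dz].  On [Y_{sigma,b}] we have
   [|v'| <= K := 4 (n - 1) / sigma], so the weight [w] is bounded and Lipschitz in
   [(v, v')] uniformly in [s], while [Phi (t, s) >= (s^2 - t^2) / 4 >= t (s - t) / 2]
   and [Phi] is Lipschitz in [v'] with a constant of order [s^2 - t^2], a growth that
   the factor [exp (- Phi)] absorbs.  Two profiles therefore give integrands differing
   by [O (||v2 - v1|| exp (- t (s - t) / 4))], whose [s]-integral is [O (||v2 - v1|| / t)].
   Integrating against [t^-2] and multiplying by [x], [T_sigma v2 - T_sigma v1] is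
   [O (||v2 - v1|| / x)], and differentiating [x int_x^oo] shows that its derivative is
   [O (||v2 - v1|| / x^2)]; for [b] large the C^1 distance is at least halved. *)

Lemma continuous_Rplus (f g : R -> R) x :
  continuous f x -> continuous g x -> continuous (fun y => f y + g y) x.
Proof. exact (continuous_plus f g x). Qed.

Lemma continuous_Rmult (f g : R -> R) x :
  continuous f x -> continuous g x -> continuous (fun y => f y * g y) x.
Proof. exact (continuous_mult f g x). Qed.

Lemma continuous_Ropp (f : R -> R) x : continuous f x -> continuous (fun y => - f y) x.
Proof. exact (continuous_opp f x). Qed.

Lemma continuous_one_plus_sqr (f : R -> R) c x :
  continuous f x -> continuous (fun y => 1 + (f y + c) ^ 2) x.
Proof.
intros Hf. apply (continuous_Rplus (fun _ => 1)); [apply continuous_const |].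
simpl. assert (Hfc : continuous (fun y => f y + c) x)
  by (apply continuous_Rplus; [exact Hf | apply continuous_const]).
apply continuous_Rmult; [exact Hfc |].
apply (continuous_Rmult _ (fun _ => 1)); [exact Hfc | apply continuous_const].
Qed.

Lemma continuous_Rmax_r (c x : R) : continuous (fun s => Rmax c s) x.
Proof.
apply (continuous_ext (fun s => (c + s + Rabs (s - c)) / 2)).
- intros s. change ((c + s + Rabs (s - c)) / 2 = Rmax c s). destruct (Rle_dec c s).
  + rewrite Rmax_right, Rabs_right by lra. field.
  + rewrite Rmax_left, Rabs_left by lra. field.
- apply (continuous_Rmult _ (fun _ => / 2)); [| apply continuous_const].
  apply continuous_Rplus; [apply (continuous_Rplus (fun _ => c)) |].
  + apply continuous_const.
  + apply continuous_id.
  + apply continuous_Rabs_comp, (continuous_Rplus (fun s => s)).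
    * apply continuous_id.
    * apply continuous_const.
Qed.

Lemma Rabs_le_at_left_end (f : R -> R) a M :
  continuous f a -> (forall x, a < x -> Rabs (f x) <= M) -> Rabs (f a) <= M.
Proof.
intros Hc H. apply Rnot_lt_le. intros Hlt.
destruct (Hc (ball (f a) (mkposreal _ (proj2 (Rlt_0_minus _ _) Hlt)))) as [d Hd];
  [now exists (mkposreal _ (proj2 (Rlt_0_minus _ _) Hlt)) |].
assert (Hx : ball a d (a + d / 2)).
{ change (Rabs (a + d / 2 - a) < d). pose proof (cond_pos d). rewrite Rabs_right; lra. }
specialize (Hd _ Hx). change (Rabs (f (a + d / 2) - f a) < Rabs (f a) - M) in Hd.
specialize (H (a + d / 2) ltac:(pose proof (cond_pos d); lra)).
pose proof (Rabs_triang_inv (f a) (f (a + d / 2))). rewrite Rabs_minus_sym in Hd. lra.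
Qed.

Lemma exp_le_exp x y : x <= y -> exp x <= exp y.
Proof. intros [H | ->]; [left; now apply exp_increasing | lra]. Qed.

Lemma Rabs_exp_opp_sub_le a b m :
  m <= a -> m <= b -> Rabs (exp (- a) - exp (- b)) <= Rabs (a - b) * exp (- m).
Proof.
assert (Hmono : forall x y, m <= x <= y -> exp (- x) - exp (- y) <= (y - x) * exp (- m)).
{ intros x y Hxy.
  assert (Ey : exp (- y) = exp (- x) * exp (- (y - x))) by (rewrite <- exp_plus; f_equal; ring).
  pose proof (exp_ineq1_le (- (y - x))).
  assert (exp (- x) <= exp (- m)) by (apply exp_le_exp; lra).
  pose proof (exp_pos (- x)).
  rewrite Ey. nra. }
intros Ha Hb. destruct (Rle_dec a b) as [Hab | Hab].
- assert (exp (- b) <= exp (- a)) by (apply exp_le_exp; lra).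
  rewrite Rabs_right, Rabs_left1 by lra. pose proof (Hmono a b ltac:(lra)). lra.
- assert (exp (- a) <= exp (- b)) by (apply exp_le_exp; lra).
  rewrite Rabs_left1, Rabs_right by lra. pose proof (Hmono b a ltac:(lra)). lra.
Qed.

Lemma mul_exp_opp_le y : 0 <= y -> y * exp (- y) <= 2 * exp (- (y / 2)).
Proof.
intros Hy. pose proof (exp_ineq1_le (y / 2)).
assert (E : exp (- y) = exp (- (y / 2)) * exp (- (y / 2)))
  by (rewrite <- exp_plus; f_equal; lra).
assert (E1 : exp (- (y / 2)) * exp (y / 2) = 1)
  by (rewrite <- exp_plus; replace (- (y / 2) + y / 2) with 0 by ring; apply exp_0).
pose proof (exp_pos (- (y / 2))). rewrite E. nra.
Qed.

(** * Improper integrals on a half-line *)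

Lemma RInt_nonneg_incr (f : R -> R) a x y :
  a <= x <= y -> ex_RInt f a y -> (forall z, a <= z -> 0 <= f z) ->
  RInt f a x <= RInt f a y.
Proof.
intros Hxy Hf Hpos.
assert (Hax : ex_RInt f a x) by (apply (ex_RInt_Chasles_1 f a x y); [lra | exact Hf]).
assert (Hxy' : ex_RInt f x y) by (apply (ex_RInt_Chasles_2 f a x y); [lra | exact Hf]).
rewrite <- (RInt_Chasles f a x y Hax Hxy').
assert (0 <= RInt f x y) by (apply RInt_ge_0; [lra | exact Hxy' | intros z Hz; apply Hpos; lra]).
simpl; unfold plus; simpl; lra.
Qed.

Lemma is_RInt_gen_pinf_nonneg (f : R -> R) a M :
  (forall B, a <= B -> ex_RInt f a B) ->
  (forall x, a <= x -> 0 <= f x) ->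
  (forall B, a <= B -> RInt f a B <= M) ->
  exists l, 0 <= l <= M /\ is_RInt_gen f (at_point a) (Rbar_locally p_infty) l.
Proof.
intros Hex Hpos HM.
set (E := fun y => exists B, a <= B /\ y = RInt f a B).
assert (Ea : E 0) by (exists a; split; [lra | now rewrite RInt_point]).
destruct (completeness E) as [l [Hub Hlub]].
{ exists M. intros y [B [HB ->]]. now apply HM. }
{ now exists 0. }
exists l. split; [split; [now apply Hub | apply Hlub; intros y [B [HB ->]]; now apply HM] |].
intros P [eps HP].
assert (HB0 : exists B0, a <= B0 /\ l - eps < RInt f a B0).
{ apply Classical_Pred_Type.not_all_not_ex. intros Hnone.
  assert (l <= l - eps); [| pose proof (cond_pos eps); lra].
  apply Hlub. intros y [B [HB ->]].
  apply Rnot_lt_le. intros Hlt. apply (Hnone B). now split. }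
destruct HB0 as [B0 [HaB0 HB0]].
apply (Filter_prod _ _ _ (fun x => x = a) (fun B => B0 < B)); [reflexivity | now exists B0 |].
intros x B -> HB. exists (RInt f a B). split.
- apply (@RInt_correct R_CompleteNormedModule), Hex. lra.
- apply HP. change (Rabs (RInt f a B - l) < eps).
  assert (RInt f a B <= l) by (apply Hub; exists B; split; [lra | reflexivity]).
  assert (RInt f a B0 <= RInt f a B) by (apply RInt_nonneg_incr; auto; [lra | apply Hex; lra]).
  apply Rabs_def1; lra.
Qed.

Lemma is_RInt_gen_pinf_ext (f g : R -> R) a l :
  (forall x, a < x -> f x = g x) ->
  is_RInt_gen f (at_point a) (Rbar_locally p_infty) l ->
  is_RInt_gen g (at_point a) (Rbar_locally p_infty) l.
Proof.
intros Hfg. apply is_RInt_gen_ext.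
apply (Filter_prod _ _ _ (fun x => x = a) (fun B => a < B)); [reflexivity | now exists a |].
intros x B -> HB y Hy. simpl in Hy. rewrite Rmin_left, Rmax_right in Hy by lra.
apply Hfg. lra.
Qed.

Lemma is_RInt_gen_pinf_tail (f : R -> R) a t l :
  ex_RInt f a t ->
  is_RInt_gen f (at_point a) (Rbar_locally p_infty) l ->
  is_RInt_gen f (at_point t) (Rbar_locally p_infty) (l - RInt f a t).
Proof.
intros Hf Hl.
assert (Hta : is_RInt_gen f (at_point t) (at_point a) (- RInt f a t)).
{ apply is_RInt_gen_at_point.
  exact (is_RInt_swap _ _ _ _ ((@RInt_correct R_CompleteNormedModule) _ _ _ Hf)). }
replace (l - RInt f a t) with (plus (- RInt f a t) l) by (unfold plus; simpl; ring).
exact (is_RInt_gen_Chasles f a _ _ Hta Hl).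
Qed.

Lemma is_RInt_gen_pinf_dist (f1 f2 g : R -> R) a l1 l2 M :
  is_RInt_gen f1 (at_point a) (Rbar_locally p_infty) l1 ->
  is_RInt_gen f2 (at_point a) (Rbar_locally p_infty) l2 ->
  (forall x, a <= x -> Rabs (f2 x - f1 x) <= g x) ->
  (forall B, a <= B -> ex_RInt g a B) ->
  (forall B, a <= B -> RInt g a B <= M) ->
  Rabs (l2 - l1) <= M.
Proof.
intros H1 H2 Hg Hex HM.
destruct (is_RInt_gen_pinf_nonneg g a M Hex) as [lg [[_ HlgM] Hlg]]; auto.
{ intros x Hx. eapply Rle_trans; [apply Rabs_pos | now apply Hg]. }
assert (Hdom : filter_prod (at_point a) (Rbar_locally p_infty) (fun ab => a <= fst ab <= snd ab)).
{ apply (Filter_prod _ _ _ (fun x => x = a) (fun B => a < B)); [reflexivity | now exists a |].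
  intros x B -> HB; simpl; lra. }
apply Rle_trans with lg; [| exact HlgM].
apply (RInt_gen_norm (V := R_CompleteNormedModule) (Fa := at_point a)
         (Fb := Rbar_locally p_infty) (fun x => minus (f2 x) (f1 x)) g).
- refine (filter_imp _ _ _ Hdom). intros ab Hab. apply Hab.
- refine (filter_imp _ _ _ Hdom). intros ab Hab x Hx. apply Hg. simpl in Hab. lra.
- exact (is_RInt_gen_minus _ _ _ _ H2 H1).
- exact Hlg.
Qed.

Definition decay (t s : R) := exp (- (t * (s - t)) / 4).

Lemma decay_ge_exp t s : 1 <= t <= s -> exp (- ((s ^ 2 - t ^ 2) / 4 / 2)) <= decay t s.
Proof. intros H. apply exp_le_exp. nra. Qed.

Lemma RInt_decay_le t B : 1 <= t <= B ->
  ex_RInt (decay t) t B /\ RInt (decay t) t B <= 4 / t.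
Proof.
intros Ht.
assert (H : is_RInt (decay t) t B (minus (- 4 / t * decay t B) (- 4 / t * decay t t))).
{ apply (is_RInt_derive (fun s => - 4 / t * decay t s)).
  - intros x _. unfold decay. auto_derive; [easy |].
    unfold Rminus, Rdiv. field. lra.
  - intros x _. apply (ex_derive_continuous (K := R_AbsRing) (V := R_NormedModule)).
    unfold decay. auto_derive. easy. }
split; [eexists; exact H |].
rewrite (is_RInt_unique _ _ _ _ H). unfold minus, plus, opp, decay; simpl.
replace (- (t * (t - t)) / 4) with 0 by field. rewrite exp_0.
pose proof (exp_pos (- (t * (B - t)) / 4)).
assert (0 < / t) by (apply Rinv_0_lt_compat; lra). unfold Rdiv. nra.
Qed.

Lemma RInt_inv_cube_le x B : 0 < x <= B ->
  ex_RInt (fun t => / t ^ 3) x B /\ RInt (fun t => / t ^ 3) x B <= / (2 * x ^ 2).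
Proof.
intros Hx.
assert (H : is_RInt (fun t => / t ^ 3) x B (minus (- / (2 * B ^ 2)) (- / (2 * x ^ 2)))).
{ apply (is_RInt_derive (fun t => - / (2 * t ^ 2))); intros y Hy;
    rewrite Rmin_left, Rmax_right in Hy by lra.
  - auto_derive; [nra | field; lra].
  - apply (ex_derive_continuous (K := R_AbsRing) (V := R_NormedModule)).
    auto_derive. pose proof (pow_lt y 3 ltac:(lra)). simpl in *. lra. }
split; [eexists; exact H |].
rewrite (is_RInt_unique _ _ _ _ H). unfold minus, plus, opp; simpl.
assert (0 < / (2 * (B * (B * 1)))) by (apply Rinv_0_lt_compat; nra). lra.
Qed.

(** * Pointwise estimates on the kernel *)

Section Kernel.

Variables (sigma K : R).
Hypotheses (Hsigma : 0 < sigma) (HK : 0 <= K).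

Definition weight (s d u : R) := (1 + (d + sigma) ^ 2) / (u + sigma * s) * (s / 2).

Definition weight_bound := (1 + (sigma + K) ^ 2) / (2 * sigma).
Definition weight_lip := (sigma + K) / sigma + (1 + (sigma + K) ^ 2) / (2 * sigma ^ 2).
Definition kernel_lip := weight_lip + 8 * weight_bound * (sigma + K).

Lemma weight_bound_ge0 : 0 <= weight_bound.
Proof. unfold weight_bound. pose proof (pow2_ge_0 (sigma + K)). apply Rdiv_le_0_compat; lra. Qed.

Lemma kernel_lip_ge0 : 0 <= kernel_lip.
Proof.
unfold kernel_lip, weight_lip. pose proof weight_bound_ge0. pose proof (pow2_ge_0 (sigma + K)).
assert (0 <= (sigma + K) / sigma) by (apply Rdiv_le_0_compat; lra).
assert (0 <= (1 + (sigma + K) ^ 2) / (2 * sigma ^ 2)) by (apply Rdiv_le_0_compat; nra).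
nra.
Qed.

Lemma shift_sq_le d : Rabs d <= K -> (d + sigma) ^ 2 <= (sigma + K) ^ 2.
Proof. intros Hd. apply Rabs_le_between in Hd. nra. Qed.

Lemma ratio_bounds s u : 0 < s -> 0 < u ->
  0 < s / (u + sigma * s) /\ s / (u + sigma * s) * sigma <= 1.
Proof.
intros Hs Hu. assert (0 < u + sigma * s) by nra. split.
- now apply Rdiv_lt_0_compat.
- apply (Rmult_le_reg_l (u + sigma * s)); [lra |].
  replace ((u + sigma * s) * (s / (u + sigma * s) * sigma)) with (sigma * s) by (field; lra). lra.
Qed.

Lemma ratio_lipschitz s u1 u2 : 1 <= s -> 0 < u1 -> 0 < u2 ->
  Rabs (s / (u2 + sigma * s) - s / (u1 + sigma * s)) <= Rabs (u2 - u1) / sigma ^ 2.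
Proof.
intros Hs Hu1 Hu2.
destruct (ratio_bounds s u1) as [R1 S1]; [lra | lra |].
destruct (ratio_bounds s u2) as [R2 S2]; [lra | lra |].
set (r1 := s / (u1 + sigma * s)) in *. set (r2 := s / (u2 + sigma * s)) in *.
assert (E : (r2 - r1) * s = r1 * r2 * (u1 - u2)) by (unfold r1, r2; field; nra).
assert (Habs : Rabs (r2 - r1) * s = r1 * r2 * Rabs (u2 - u1)).
{ rewrite <- (Rabs_right s), <- Rabs_mult, E, Rabs_mult, Rabs_right, Rabs_minus_sym by nra.
  reflexivity. }
assert (r1 * r2 * sigma ^ 2 <= 1).
{ replace (r1 * r2 * sigma ^ 2) with ((r1 * sigma) * (r2 * sigma)) by ring.
  assert (0 <= r1 * sigma) by nra. assert (0 <= r2 * sigma) by nra.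
  pose proof (Rmult_le_compat (r1 * sigma) 1 (r2 * sigma) 1). lra. }
pose proof (Rabs_pos (r2 - r1)). pose proof (Rabs_pos (u2 - u1)).
apply (Rmult_le_reg_r (sigma ^ 2)); [nra |].
replace (Rabs (u2 - u1) / sigma ^ 2 * sigma ^ 2) with (Rabs (u2 - u1)) by (field; lra).
nra.
Qed.

Lemma weight_ratio_form s d u : 0 < s -> 0 < u ->
  weight s d u = (1 + (d + sigma) ^ 2) * (s / (u + sigma * s)) / 2.
Proof. intros Hs Hu. unfold weight. field. nra. Qed.

Lemma weight_bounds s d u : 0 < s -> Rabs d <= K -> 0 < u -> 0 <= weight s d u <= weight_bound.
Proof.
intros Hs Hd Hu. rewrite weight_ratio_form by lra.
destruct (ratio_bounds s u Hs Hu) as [R S]. pose proof (shift_sq_le d Hd).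
pose proof (pow2_ge_0 (d + sigma)). unfold weight_bound.
split; [nra |].
apply (Rmult_le_reg_l (2 * sigma)); [lra |].
replace (2 * sigma * ((1 + (sigma + K) ^ 2) / (2 * sigma))) with (1 + (sigma + K) ^ 2)
  by (field; lra).
nra.
Qed.

Lemma weight_lipschitz s d1 d2 u1 u2 A B : 1 <= s ->
  Rabs d1 <= K -> Rabs d2 <= K -> 0 < u1 -> 0 < u2 ->
  Rabs (d2 - d1) <= B -> Rabs (u2 - u1) <= A ->
  Rabs (weight s d2 u2 - weight s d1 u1) <= weight_lip * (A + B).
Proof.
intros Hs Hd1 Hd2 Hu1 Hu2 HdB HuA.
rewrite !weight_ratio_form by lra.
pose proof (ratio_lipschitz s u1 u2 Hs Hu1 Hu2) as Hr.
destruct (ratio_bounds s u2) as [R2 S2]; [lra | lra |].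
set (r1 := s / (u1 + sigma * s)) in *. set (r2 := s / (u2 + sigma * s)) in *.
pose proof (shift_sq_le d1 Hd1).
replace ((1 + (d2 + sigma) ^ 2) * r2 / 2 - (1 + (d1 + sigma) ^ 2) * r1 / 2) with
  ((d2 - d1) * (d2 + d1 + 2 * sigma) * (r2 / 2) + (1 + (d1 + sigma) ^ 2) / 2 * (r2 - r1)) by field.
assert (Hsum : Rabs (d2 + d1 + 2 * sigma) <= 2 * (sigma + K)).
{ apply Rabs_le_between in Hd1. apply Rabs_le_between in Hd2. apply Rabs_le. lra. }
assert (X1 : Rabs ((d2 - d1) * (d2 + d1 + 2 * sigma) * (r2 / 2)) <= (sigma + K) / sigma * B).
{ rewrite !Rabs_mult, (Rabs_right (r2 / 2)) by lra.
  pose proof (Rabs_pos (d2 - d1)). pose proof (Rabs_pos (d2 + d1 + 2 * sigma)).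
  apply Rle_trans with (B * (2 * (sigma + K)) * (/ sigma / 2)).
  - apply Rmult_le_compat; [nra | lra | nra |].
    apply Rmult_le_compat_r; [lra |]. apply (Rmult_le_reg_r sigma); [lra |].
    rewrite Rinv_l; lra.
  - right. field. lra. }
assert (X2 : Rabs ((1 + (d1 + sigma) ^ 2) / 2 * (r2 - r1))
             <= (1 + (sigma + K) ^ 2) / (2 * sigma ^ 2) * A).
{ pose proof (pow2_ge_0 (d1 + sigma)). pose proof (Rabs_pos (r2 - r1)).
  rewrite Rabs_mult, (Rabs_right ((1 + (d1 + sigma) ^ 2) / 2)) by lra.
  apply Rle_trans with ((1 + (sigma + K) ^ 2) / 2 * (A / sigma ^ 2)).
  - apply Rmult_le_compat; [lra | lra | lra |]. eapply Rle_trans; [exact Hr |].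
    apply Rmult_le_compat_r; [| exact HuA]. apply Rlt_le, Rinv_0_lt_compat. nra.
  - right. field. lra. }
eapply Rle_trans; [apply Rabs_triang |].
unfold weight_lip. pose proof (Rabs_pos (d2 - d1)).
assert (0 <= (sigma + K) / sigma) by (apply Rdiv_le_0_compat; lra).
assert (0 <= (1 + (sigma + K) ^ 2) / (2 * sigma ^ 2)) by (apply Rdiv_le_0_compat; nra).
assert (0 <= A) by (eapply Rle_trans; [apply Rabs_pos | exact HuA]).
nra.
Qed.

Definition kernel (s d u Phi : R) := weight s d u * exp (- Phi).

Lemma kernel_bounds t s d u Phi : 1 <= t <= s -> Rabs d <= K -> 0 < u ->
  (s ^ 2 - t ^ 2) / 4 <= Phi -> 0 <= kernel s d u Phi <= weight_bound * decay t s.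
Proof.
intros Hts Hd Hu HPhi. unfold kernel.
pose proof (weight_bounds s d u ltac:(lra) Hd Hu).
assert (exp (- Phi) <= decay t s).
{ eapply Rle_trans; [| now apply decay_ge_exp]. apply exp_le_exp. nra. }
pose proof (exp_pos (- Phi)). split; nra.
Qed.

Lemma kernel_lipschitz t s d1 d2 u1 u2 Phi1 Phi2 A B : 1 <= t <= s ->
  Rabs d1 <= K -> Rabs d2 <= K -> 0 < u1 -> 0 < u2 ->
  Rabs (d2 - d1) <= B -> Rabs (u2 - u1) <= A ->
  (s ^ 2 - t ^ 2) / 4 <= Phi1 -> (s ^ 2 - t ^ 2) / 4 <= Phi2 ->
  Rabs (Phi2 - Phi1) <= 4 * (sigma + K) * B * ((s ^ 2 - t ^ 2) / 4) ->
  Rabs (kernel s d2 u2 Phi2 - kernel s d1 u1 Phi1) <= kernel_lip * (A + B) * decay t s.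
Proof.
intros Hts Hd1 Hd2 Hu1 Hu2 HdB HuA HP1 HP2 HPd. unfold kernel.
pose proof (decay_ge_exp t s Hts) as Hdec.
set (y := (s ^ 2 - t ^ 2) / 4) in *.
assert (Hy : 0 <= y) by (unfold y; nra).
assert (HB : 0 <= B) by (eapply Rle_trans; [apply Rabs_pos | exact HdB]).
pose proof (weight_lipschitz s d1 d2 u1 u2 A B ltac:(lra) Hd1 Hd2 Hu1 Hu2 HdB HuA) as Hw.
pose proof (weight_bounds s d1 u1 ltac:(lra) Hd1 Hu1) as Hw1.
(* the exponent difference grows like y, which the factor exp (- y) absorbs *)
assert (HE : Rabs (exp (- Phi2) - exp (- Phi1)) <= 8 * (sigma + K) * B * decay t s).
{ eapply Rle_trans; [now apply (Rabs_exp_opp_sub_le Phi2 Phi1 y) |].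
  pose proof (mul_exp_opp_le y Hy). pose proof (exp_pos (- y)). pose proof (Rabs_pos (Phi2 - Phi1)).
  apply Rle_trans with (4 * (sigma + K) * B * (y * exp (- y))); [nra |].
  assert (0 <= 4 * (sigma + K) * B) by nra.
  apply Rle_trans with (4 * (sigma + K) * B * (2 * decay t s));
    [apply Rmult_le_compat_l; lra | lra]. }
assert (HE2 : exp (- Phi2) <= decay t s).
{ eapply Rle_trans; [| exact Hdec]. apply exp_le_exp. lra. }
replace (weight s d2 u2 * exp (- Phi2) - weight s d1 u1 * exp (- Phi1)) with
  ((weight s d2 u2 - weight s d1 u1) * exp (- Phi2)
   + weight s d1 u1 * (exp (- Phi2) - exp (- Phi1)))
  by ring.
eapply Rle_trans; [apply Rabs_triang |].
rewrite !Rabs_mult, (Rabs_right (exp (- Phi2))), (Rabs_right (weight s d1 u1))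
  by (pose proof (exp_pos (- Phi2)); lra).
pose proof (exp_pos (- Phi2)). pose proof (Rabs_pos (weight s d2 u2 - weight s d1 u1)).
pose proof (Rabs_pos (exp (- Phi2) - exp (- Phi1))). pose proof weight_bound_ge0.
assert (0 <= A) by (eapply Rle_trans; [apply Rabs_pos | exact HuA]).
assert (0 <= weight_lip * (A + B)) by (eapply Rle_trans; [apply Rabs_pos | exact Hw]).
assert (0 <= decay t s) by (unfold decay; left; apply exp_pos).
apply Rle_trans with
  (weight_lip * (A + B) * decay t s + weight_bound * (8 * (sigma + K) * B * decay t s)).
- apply Rplus_le_compat; apply Rmult_le_compat; lra.
- assert (0 <= weight_bound * (sigma + K) * A * decay t s)
    by (apply Rmult_le_pos; [apply Rmult_le_pos; [apply Rmult_le_pos |] |]; lra).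
  unfold kernel_lip. lra.
Qed.

End Kernel.

(** * The operator on a single profile *)

Definition admissible (b K : R) (v : R -> R) : Prop :=
  (forall x, b <= x -> continuous v x) /\
  (forall x, b <= x -> continuous (Derive v) x) /\
  (forall x, b <= x -> 0 < v x) /\
  (forall x, b <= x -> Rabs (Derive v x) <= K).

Section Operator.

Variables (sigma b K : R) (v : R -> R).
Hypotheses (Hsigma : 0 < sigma) (Hb : 1 <= b) (Hv : admissible b K v).

(* Freezing [v] at [b] to the left of [b] makes all integrands below continuous on the
   whole line; on [b, +oo), where [Tsig] lives, nothing changes. *)
Definition vb s := v (Rmax b s).
Definition dvb s := Derive v (Rmax b s).

Definition rate z := z / 2 * (1 + (dvb z + sigma) ^ 2).
Definition integrand t s := kernel sigma s (dvb s) (vb s) (RInt rate t s).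
Definition phi t := RInt rate b t.

Lemma vb_continuous x : continuous vb x.
Proof. apply (continuous_comp (Rmax b) v); [apply continuous_Rmax_r | apply Hv, Rmax_l]. Qed.

Lemma dvb_continuous x : continuous dvb x.
Proof.
apply (continuous_comp (Rmax b) (Derive v)); [apply continuous_Rmax_r | apply Hv, Rmax_l].
Qed.

Lemma vb_pos x : 0 < vb x.
Proof. apply Hv, Rmax_l. Qed.

Lemma dvb_bound x : Rabs (dvb x) <= K.
Proof. apply Hv, Rmax_l. Qed.

Lemma rate_continuous x : continuous rate x.
Proof.
apply continuous_Rmult.
- apply (continuous_Rmult (fun z => z)); [apply continuous_id | apply continuous_const].
- apply continuous_one_plus_sqr, dvb_continuous.
Qed.

Lemma ex_RInt_rate x y : ex_RInt rate x y.
Proof. apply (ex_RInt_continuous (V := R_CompleteNormedModule)). intros; apply rate_continuous. Qed.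

Lemma is_derive_RInt_rate t x : is_derive (RInt rate t) x (rate x).
Proof.
apply (is_derive_RInt rate (RInt rate t) t); [| apply rate_continuous].
apply filter_forall. intros y. apply (@RInt_correct R_CompleteNormedModule), ex_RInt_rate.
Qed.

Lemma RInt_rate_continuous t x : continuous (RInt rate t) x.
Proof.
apply (ex_derive_continuous (K := R_AbsRing) (V := R_NormedModule)).
eexists. apply is_derive_RInt_rate.
Qed.

Lemma RInt_rate_phi t s : RInt rate t s = phi s - phi t.
Proof.
unfold phi.
assert (HC : RInt rate b t + RInt rate t s = RInt rate b s)
  by (apply (RInt_Chasles (V := R_CompleteNormedModule)); apply ex_RInt_rate).
lra.
Qed.

Lemma RInt_rate_ge t s : 0 <= t <= s -> (s ^ 2 - t ^ 2) / 4 <= RInt rate t s.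
Proof.
intros Hts.
assert (H : is_RInt (fun z => z / 2) t s (minus (s ^ 2 / 4) (t ^ 2 / 4))).
{ apply (is_RInt_derive (fun z => z ^ 2 / 4)); intros x _.
  - auto_derive; [easy | field].
  - apply (ex_derive_continuous (K := R_AbsRing) (V := R_NormedModule)). auto_derive. easy. }
replace ((s ^ 2 - t ^ 2) / 4) with (RInt (fun z => z / 2) t s)
  by (rewrite (is_RInt_unique _ _ _ _ H); unfold minus, plus, opp; simpl; field).
apply RInt_le; [lra | eexists; exact H | apply ex_RInt_rate |].
intros x Hx. unfold rate. pose proof (pow2_ge_0 (dvb x + sigma)). nra.
Qed.

Lemma integrand_factor t s : integrand t s = exp (phi t) * integrand b s.
Proof.
unfold integrand, kernel. rewrite (RInt_rate_phi t s), (RInt_rate_phi b s).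
assert (Hphib : phi b = 0) by (unfold phi; now rewrite RInt_point).
rewrite Hphib. replace (- (phi s - phi t)) with (phi t + - (phi s - 0)) by ring.
rewrite exp_plus. ring.
Qed.

Lemma integrand_continuous t s : 0 < s -> continuous (integrand t) s.
Proof.
intros Hs. unfold integrand, kernel, weight.
apply continuous_Rmult; [apply continuous_Rmult |].
- apply continuous_Rmult; [apply continuous_one_plus_sqr, dvb_continuous |].
  apply continuous_Rinv_comp.
  + apply continuous_Rplus; [apply vb_continuous |].
    apply (continuous_Rmult (fun _ => sigma) (fun z => z));
      [apply continuous_const | apply continuous_id].
  + pose proof (vb_pos s). nra.
- apply (continuous_Rmult (fun z => z)); [apply continuous_id | apply continuous_const].
- apply continuous_exp_comp, continuous_Ropp, RInt_rate_continuous.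
Qed.

Lemma ex_RInt_integrand t x y : 0 < x -> 0 < y -> ex_RInt (integrand t) x y.
Proof.
intros Hx Hy. apply (ex_RInt_continuous (V := R_CompleteNormedModule)). intros z Hz.
apply integrand_continuous. assert (0 < Rmin x y) by (now apply Rmin_glb_lt). lra.
Qed.

Lemma integrand_bounds t s : b <= t <= s ->
  0 <= integrand t s <= weight_bound sigma K * decay t s.
Proof.
intros Hts. apply kernel_bounds; [lra | lra | apply dvb_bound | apply vb_pos |].
apply RInt_rate_ge. lra.
Qed.

Lemma RInt_integrand_bounds t B : b <= t <= B ->
  0 <= RInt (integrand t) t B <= 4 * weight_bound sigma K / t.
Proof.
intros Ht. destruct (RInt_decay_le t B) as [Hex Hle]; [lra |].
assert (Hf : ex_RInt (integrand t) t B) by (apply ex_RInt_integrand; lra).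
split.
- apply RInt_ge_0; [lra | exact Hf |]. intros x Hx. apply integrand_bounds. lra.
- apply Rle_trans with (RInt (fun s => weight_bound sigma K * decay t s) t B).
  + apply RInt_le; [lra | exact Hf | apply (ex_RInt_scal (V := R_NormedModule)); exact Hex |].
    intros x Hx. apply integrand_bounds. lra.
  + rewrite (RInt_scal (V := R_CompleteNormedModule)) by exact Hex.
    pose proof (weight_bound_ge0 sigma K Hsigma).
    apply Rle_trans with (weight_bound sigma K * (4 / t)); [now apply Rmult_le_compat_l |].
    right. field. lra.
Qed.

Definition inner_total := RInt_gen (integrand b) (at_point b) (Rbar_locally p_infty).

Lemma is_RInt_gen_inner_total :
  is_RInt_gen (integrand b) (at_point b) (Rbar_locally p_infty) inner_total.
Proof.
destruct (is_RInt_gen_pinf_nonneg (integrand b) b (4 * weight_bound sigma K / b)) as [l [_ Hl]].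
- intros B HB. apply ex_RInt_integrand; lra.
- intros x Hx. apply integrand_bounds. lra.
- intros B HB. apply RInt_integrand_bounds. lra.
- unfold inner_total. now rewrite (is_RInt_gen_unique _ _ Hl).
Qed.

(* The inner integral [int_t^oo integrand t], in a form whose continuity in [t] is visible. *)
Definition inner t := exp (phi t) * (inner_total - RInt (integrand b) b t).

Lemma is_RInt_gen_inner t : b <= t ->
  is_RInt_gen (integrand t) (at_point t) (Rbar_locally p_infty) (inner t).
Proof.
intros Ht.
assert (Htail := is_RInt_gen_pinf_tail (integrand b) b t inner_total
                   (ex_RInt_integrand b b t ltac:(lra) ltac:(lra)) is_RInt_gen_inner_total).
apply (is_RInt_gen_scal _ (exp (phi t))) in Htail.
apply (is_RInt_gen_pinf_ext (fun s => scal (exp (phi t)) (integrand b s))); [| exact Htail].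
intros s _. symmetry. apply integrand_factor.
Qed.

Lemma inner_bounds t : b <= t -> 0 <= inner t <= 4 * weight_bound sigma K / t.
Proof.
intros Ht.
destruct (is_RInt_gen_pinf_nonneg (integrand t) t (4 * weight_bound sigma K / t)) as [l [Hlb Hl]].
- intros B HB. apply ex_RInt_integrand; lra.
- intros x Hx. apply integrand_bounds. lra.
- intros B HB. apply RInt_integrand_bounds. lra.
- rewrite <- (is_RInt_gen_unique _ _ (is_RInt_gen_inner t Ht)), (is_RInt_gen_unique _ _ Hl).
  exact Hlb.
Qed.

Lemma inner_continuous t : b <= t -> continuous inner t.
Proof.
intros Ht. unfold inner.
apply continuous_Rmult; [apply continuous_exp_comp, RInt_rate_continuous |].
apply (continuous_Rplus (fun _ => inner_total)); [apply continuous_const |].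
apply continuous_Ropp, (ex_derive_continuous (K := R_AbsRing) (V := R_NormedModule)).
exists (integrand b t).
apply (is_derive_RInt (integrand b) (RInt (integrand b) b) b); [| apply integrand_continuous; lra].
apply (filter_imp (fun y => 0 < y)); [| apply open_gt; lra].
intros y Hy. apply (@RInt_correct R_CompleteNormedModule), ex_RInt_integrand; lra.
Qed.

Definition outer t := / t ^ 2 * inner t.

Lemma outer_continuous t : b <= t -> continuous outer t.
Proof.
intros Ht. apply continuous_Rmult; [| now apply inner_continuous].
apply continuous_Rinv_comp; [| pose proof (pow_lt t 2); lra].
apply (ex_derive_continuous (K := R_AbsRing) (V := R_NormedModule)). auto_derive. easy.
Qed.

Lemma ex_RInt_outer x y : b <= x -> b <= y -> ex_RInt outer x y.
Proof.
intros Hx Hy. apply (ex_RInt_continuous (V := R_CompleteNormedModule)). intros z Hz.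
apply outer_continuous. assert (b <= Rmin x y) by (now apply Rmin_glb). lra.
Qed.

Lemma outer_bounds t : b <= t -> 0 <= outer t <= 4 * weight_bound sigma K * / t ^ 3.
Proof.
intros Ht. unfold outer. pose proof (inner_bounds t Ht).
assert (0 < / t ^ 2) by (apply Rinv_0_lt_compat, pow_lt; lra).
split; [nra |].
replace (4 * weight_bound sigma K * / t ^ 3) with (/ t ^ 2 * (4 * weight_bound sigma K / t))
  by (field; lra).
apply Rmult_le_compat_l; lra.
Qed.

Lemma RInt_outer_le x B : b <= x <= B -> RInt outer x B <= 2 * weight_bound sigma K / x ^ 2.
Proof.
intros Hx. destruct (RInt_inv_cube_le x B) as [Hex Hle]; [lra |].
pose proof (weight_bound_ge0 sigma K Hsigma).
apply Rle_trans with (RInt (fun t => 4 * weight_bound sigma K * / t ^ 3) x B).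
- apply RInt_le; [lra | apply ex_RInt_outer; lra |
                  apply (ex_RInt_scal (V := R_NormedModule)); exact Hex |].
  intros y Hy. apply outer_bounds. lra.
- rewrite (RInt_scal (V := R_CompleteNormedModule)) by exact Hex.
  apply Rle_trans with (4 * weight_bound sigma K * / (2 * x ^ 2));
    [apply Rmult_le_compat_l; lra |].
  right. field. lra.
Qed.

Definition outer_total := RInt_gen outer (at_point b) (Rbar_locally p_infty).
Definition tail x := outer_total - RInt outer b x.

Lemma is_RInt_gen_tail x : b <= x ->
  is_RInt_gen outer (at_point x) (Rbar_locally p_infty) (tail x).
Proof.
intros Hx. apply is_RInt_gen_pinf_tail; [apply ex_RInt_outer; lra |].
destruct (is_RInt_gen_pinf_nonneg outer b (2 * weight_bound sigma K / b ^ 2)) as [l [_ Hl]].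
- intros B HB. apply ex_RInt_outer; lra.
- intros y Hy. apply outer_bounds. lra.
- intros B HB. apply RInt_outer_le. lra.
- unfold outer_total. now rewrite (is_RInt_gen_unique _ _ Hl).
Qed.

Lemma Tsig_tail n x : b <= x -> Tsig n sigma v x = 2 * (INR n - 1) * x * tail x.
Proof.
intros Hx. unfold Tsig. f_equal. apply is_RInt_gen_unique.
apply (is_RInt_gen_pinf_ext outer); [| now apply is_RInt_gen_tail].
intros t Ht. unfold outer. f_equal. symmetry. apply is_RInt_gen_unique.
apply (is_RInt_gen_pinf_ext (integrand t)); [| apply is_RInt_gen_inner; lra].
intros s Hs. unfold integrand, kernel, weight, vb, dvb. rewrite Rmax_right by lra.
do 3 f_equal. apply RInt_ext. intros z Hz. rewrite Rmin_left, Rmax_right in Hz by lra.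
unfold rate, dvb. now rewrite Rmax_right by lra.
Qed.

Lemma Tsig_derive n x : b < x ->
  is_derive (Tsig n sigma v) x (2 * (INR n - 1) * (tail x - x * outer x)).
Proof.
intros Hx.
apply (is_derive_ext_loc (fun y => 2 * (INR n - 1) * (y * (outer_total - RInt outer b y)))).
- apply (filter_imp (fun y => b < y)); [| apply open_gt; lra].
  intros y Hy. rewrite Tsig_tail by lra. symmetry. apply Rmult_assoc.
- assert (HR : is_derive (RInt outer b) x (outer x)).
  { apply (is_derive_RInt outer (RInt outer b) b); [| apply outer_continuous; lra].
    apply (filter_imp (fun y => b < y)); [| apply open_gt; lra].
    intros y Hy. apply (@RInt_correct R_CompleteNormedModule), ex_RInt_outer; lra. }
  assert (HD : is_derive (fun y => outer_total - RInt outer b y) x (0 - outer x)).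
  { apply (is_derive_minus (K := R_AbsRing) (V := R_NormedModule) (fun _ => outer_total));
      [| exact HR].
    apply (is_derive_const (K := R_AbsRing) (V := R_NormedModule)). }
  assert (HM : is_derive (fun y => y * (outer_total - RInt outer b y)) x
                 (1 * (outer_total - RInt outer b x) + x * (0 - outer x))).
  { apply (is_derive_mult (K := R_AbsRing) (fun y => y) (fun y => outer_total - RInt outer b y));
      [apply (is_derive_id (K := R_AbsRing)) | exact HD |].
    intros; apply Rmult_comm. }
  replace (2 * (INR n - 1) * (tail x - x * outer x))
    with (2 * (INR n - 1) * (1 * (outer_total - RInt outer b x) + x * (0 - outer x)))
    by (unfold tail; ring).
  now apply is_derive_scal.
Qed.

End Operator.

(** * The contraction estimate *)

Lemma C1norm_le b (w : R -> R) alpha beta :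
  (forall x, b <= x -> Rabs (w x) <= alpha) ->
  (forall x, b < x -> Rabs (Derive w x) <= beta) ->
  Rbar_le (C1norm b w) (alpha + beta).
Proof.
intros Hw Hdw. unfold C1norm. change (Finite (alpha + beta)) with (Rbar_plus alpha beta).
apply Rbar_plus_le_compat; apply Lub_Rbar_correct; intros y [x [Hx ->]]; simpl; auto.
Qed.

Lemma Rbar_le_mult_C1norm b (w : R -> R) tau (X : Rbar) : 0 < tau ->
  (forall A B, (forall x, b <= x -> Rabs (w x) <= A) ->
     (forall x, b < x -> Rabs (Derive w x) <= B) -> Rbar_le X (tau * (A + B))) ->
  Rbar_le X (Rbar_mult tau (C1norm b w)).
Proof.
intros Htau H. unfold C1norm.
set (EA := fun y => exists x, b <= x /\ y = Rabs (w x)).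
set (EB := fun y => exists x, b < x /\ y = Rabs (Derive w x)).
assert (Hinf : Rbar_le X (Rbar_mult tau p_infty)).
{ unfold Rbar_mult, Rbar_mult'.
  destruct (Rle_dec 0 tau) as [Hle | ]; [| lra].
  destruct (Rle_lt_or_eq_dec 0 tau Hle); [| lra]. now destruct X. }
destruct (Lub_Rbar_correct EA) as [HA _]. destruct (Lub_Rbar_correct EB) as [HB _].
assert (EA (Rabs (w b))) by (exists b; split; [lra | reflexivity]).
assert (EB (Rabs (Derive w (b + 1)))) by (exists (b + 1); split; [lra | reflexivity]).
revert HA HB. destruct (Lub_Rbar EA) as [A | |], (Lub_Rbar EB) as [B | |];
  intros HA HB; try exact Hinf;
  try (exfalso; eapply HA; eassumption); try (exfalso; eapply HB; eassumption).
apply H; intros x Hx; [apply (HA (Rabs (w x))) | apply (HB (Rabs (Derive w x)))];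
  exists x; split; [lra | reflexivity | lra | reflexivity].
Qed.

Lemma Yset_admissible n sigma b v : 0 < sigma -> 1 <= b -> 1 <= INR n ->
  Yset n sigma b v -> admissible b (4 * (INR n - 1) / sigma) v.
Proof.
intros Hsigma Hb Hn [[[Hder Hdcont] _] [Hpos Hslope]].
split; [| split; [exact Hdcont | split; [exact Hpos |]]].
- intros x Hx. apply (ex_derive_continuous (K := R_AbsRing) (V := R_NormedModule)).
  now apply Hder.
- intros x Hx. left. eapply Rlt_le_trans; [now apply Hslope |].
  assert (1 <= x ^ 2) by (pose proof (pow_R1_Rle x 2); lra).
  unfold Rdiv. apply Rmult_le_compat_l; [lra |]. apply Rinv_le_contravar; nra.
Qed.

Section Difference.

Variables (sigma b K A B : R) (v1 v2 : R -> R).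
Hypotheses (Hsigma : 0 < sigma) (Hb : 1 <= b) (HK : 0 <= K)
  (Hv1 : admissible b K v1) (Hv2 : admissible b K v2)
  (HvA : forall x, b <= x -> Rabs (v2 x - v1 x) <= A)
  (HdB_open : forall x, b < x -> Rabs (Derive v2 x - Derive v1 x) <= B).

Let HdB x : b <= x -> Rabs (Derive v2 x - Derive v1 x) <= B.
Proof.
intros [Hx | <-]; [now apply HdB_open |].
apply (Rabs_le_at_left_end (fun x => Derive v2 x - Derive v1 x)); [| exact HdB_open].
apply continuous_Rplus; [| apply continuous_Ropp]; [apply Hv2 | apply Hv1]; lra.
Qed.

Let A_ge0 : 0 <= A.
Proof. eapply Rle_trans; [apply Rabs_pos | apply (HvA b); lra]. Qed.

Let B_ge0 : 0 <= B.
Proof. eapply Rle_trans; [apply Rabs_pos | apply (HdB b); lra]. Qed.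

Let gap_ge0 : 0 <= kernel_lip sigma K * (A + B).
Proof. apply Rmult_le_pos; [now apply kernel_lip_ge0 | lra]. Qed.

Lemma RInt_rate_dist t s : b <= t <= s ->
  Rabs (RInt (rate sigma b v2) t s - RInt (rate sigma b v1) t s)
    <= 4 * (sigma + K) * B * ((s ^ 2 - t ^ 2) / 4).
Proof.
intros Hts.
rewrite <- (RInt_minus (V := R_CompleteNormedModule)) by (eapply ex_RInt_rate; eauto).
eapply Rle_trans.
{ apply abs_RInt_le_const with (M := s * (sigma + K) * B); [lra | |].
  - apply (ex_RInt_minus (V := R_NormedModule)); eapply ex_RInt_rate; eauto.
  - intros z Hz. change (Rabs (rate sigma b v2 z - rate sigma b v1 z) <= s * (sigma + K) * B).
    pose proof (HdB z ltac:(lra)) as Hd.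
    pose proof (dvb_bound b K v1 Hv1 z) as H1. pose proof (dvb_bound b K v2 Hv2 z) as H2.
    unfold rate, dvb in *. rewrite (Rmax_right b z) in * by lra.
    set (d1 := Derive v1 z) in *. set (d2 := Derive v2 z) in *.
    replace (z / 2 * (1 + (d2 + sigma) ^ 2) - z / 2 * (1 + (d1 + sigma) ^ 2))
      with (z / 2 * ((d2 - d1) * (d2 + d1 + 2 * sigma))) by ring.
    apply Rabs_le_between in H1. apply Rabs_le_between in H2.
    assert (Rabs (d2 + d1 + 2 * sigma) <= 2 * (sigma + K)) by (apply Rabs_le; lra).
    rewrite !Rabs_mult, (Rabs_right (z / 2)) by lra.
    pose proof (Rabs_pos (d2 - d1)). pose proof (Rabs_pos (d2 + d1 + 2 * sigma)).
    apply Rle_trans with (z / 2 * (B * (2 * (sigma + K))));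
      [apply Rmult_le_compat_l; [lra | now apply Rmult_le_compat] |].
    replace (z / 2 * (B * (2 * (sigma + K)))) with (z * (B * (sigma + K))) by field.
    replace (s * (sigma + K) * B) with (s * (B * (sigma + K))) by ring.
    apply Rmult_le_compat_r; [apply Rmult_le_pos |]; lra. }
replace ((s - t) * (s * (sigma + K) * B)) with ((s - t) * s * ((sigma + K) * B)) by ring.
replace (4 * (sigma + K) * B * ((s ^ 2 - t ^ 2) / 4)) with ((s ^ 2 - t ^ 2) * ((sigma + K) * B))
  by field.
apply Rmult_le_compat_r; [apply Rmult_le_pos |]; nra.
Qed.

Lemma integrand_dist t s : b <= t <= s ->
  Rabs (integrand sigma b v2 t s - integrand sigma b v1 t s)
    <= kernel_lip sigma K * (A + B) * decay t s.
Proof.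
intros Hts. apply kernel_lipschitz; try lra.
- eapply dvb_bound; eauto.
- eapply dvb_bound; eauto.
- eapply vb_pos; eauto.
- eapply vb_pos; eauto.
- unfold dvb. rewrite Rmax_right by lra. apply HdB. lra.
- unfold vb. rewrite Rmax_right by lra. apply HvA. lra.
- eapply RInt_rate_ge; eauto. lra.
- eapply RInt_rate_ge; eauto. lra.
- now apply RInt_rate_dist.
Qed.

Lemma inner_dist t : b <= t ->
  Rabs (inner sigma b v2 t - inner sigma b v1 t) <= 4 * kernel_lip sigma K * (A + B) / t.
Proof.
intros Ht.
apply (is_RInt_gen_pinf_dist (integrand sigma b v1 t) (integrand sigma b v2 t)
         (fun s => kernel_lip sigma K * (A + B) * decay t s) t).
- eapply is_RInt_gen_inner; eauto.
- eapply is_RInt_gen_inner; eauto.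
- intros s Hs. apply integrand_dist. lra.
- intros B' HB'. apply (ex_RInt_scal (V := R_NormedModule)), (RInt_decay_le t B'). lra.
- intros B' HB'. destruct (RInt_decay_le t B') as [Hex Hle]; [lra |].
  rewrite (RInt_scal (V := R_CompleteNormedModule)) by exact Hex.
  apply Rle_trans with (kernel_lip sigma K * (A + B) * (4 / t));
    [now apply Rmult_le_compat_l |].
  right. field. lra.
Qed.

Lemma outer_dist t : b <= t ->
  Rabs (outer sigma b v2 t - outer sigma b v1 t)
    <= 4 * kernel_lip sigma K * (A + B) * / t ^ 3.
Proof.
intros Ht. unfold outer.
rewrite <- Rmult_minus_distr_l, Rabs_mult, Rabs_right
  by (left; apply Rinv_0_lt_compat, pow_lt; lra).
assert (0 < / t ^ 2) by (apply Rinv_0_lt_compat, pow_lt; lra).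
apply Rle_trans with (/ t ^ 2 * (4 * kernel_lip sigma K * (A + B) / t)).
- apply Rmult_le_compat_l; [lra |]. now apply inner_dist.
- right. field. lra.
Qed.

Lemma tail_dist x : b <= x ->
  Rabs (tail sigma b v2 x - tail sigma b v1 x)
    <= 2 * kernel_lip sigma K * (A + B) / x ^ 2.
Proof.
intros Hx.
apply (is_RInt_gen_pinf_dist (outer sigma b v1) (outer sigma b v2)
         (fun t => 4 * kernel_lip sigma K * (A + B) * / t ^ 3) x).
- eapply is_RInt_gen_tail; eauto.
- eapply is_RInt_gen_tail; eauto.
- intros t Ht. apply outer_dist. lra.
- intros B' HB'. apply (ex_RInt_scal (V := R_NormedModule)), (RInt_inv_cube_le x B'). lra.
- intros B' HB'. destruct (RInt_inv_cube_le x B') as [Hex Hle]; [lra |].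
  rewrite (RInt_scal (V := R_CompleteNormedModule)) by exact Hex.
  apply Rle_trans with (4 * kernel_lip sigma K * (A + B) * / (2 * x ^ 2)).
  + apply Rmult_le_compat_l; [lra | exact Hle].
  + right. field. lra.
Qed.

Lemma Tsig_dist n x : 1 <= INR n -> b <= x ->
  Rabs (Tsig n sigma v2 x - Tsig n sigma v1 x)
    <= 4 * (INR n - 1) * kernel_lip sigma K * (A + B) / x.
Proof.
intros Hn Hx.
rewrite (Tsig_tail sigma b K v2), (Tsig_tail sigma b K v1) by (auto; lra).
rewrite <- Rmult_minus_distr_l, Rabs_mult, (Rabs_right (2 * (INR n - 1) * x)) by nra.
apply Rle_trans with (2 * (INR n - 1) * x * (2 * kernel_lip sigma K * (A + B) / x ^ 2)).
- apply Rmult_le_compat_l; [nra |]. now apply tail_dist.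
- right. field. lra.
Qed.

Lemma Tsig_derive_dist n x : 1 <= INR n -> b < x ->
  Rabs (Derive (Tsig n sigma v2) x - Derive (Tsig n sigma v1) x)
    <= 12 * (INR n - 1) * kernel_lip sigma K * (A + B) / x ^ 2.
Proof.
intros Hn Hx.
rewrite (is_derive_unique _ _ _ (Tsig_derive sigma b K v2 Hsigma Hb Hv2 n x Hx)),
        (is_derive_unique _ _ _ (Tsig_derive sigma b K v1 Hsigma Hb Hv1 n x Hx)).
pose proof (tail_dist x ltac:(lra)) as Htail. pose proof (outer_dist x ltac:(lra)) as Houter.
set (dtail := tail sigma b v2 x - tail sigma b v1 x) in *.
set (douter := outer sigma b v2 x - outer sigma b v1 x) in *.
replace (2 * (INR n - 1) * (tail sigma b v2 x - x * outer sigma b v2 x) -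
         2 * (INR n - 1) * (tail sigma b v1 x - x * outer sigma b v1 x))
  with (2 * (INR n - 1) * (dtail - x * douter)) by (unfold dtail, douter; ring).
assert (Hxo : Rabs (x * douter) <= 4 * kernel_lip sigma K * (A + B) / x ^ 2).
{ rewrite Rabs_mult, Rabs_right by lra.
  apply Rle_trans with (x * (4 * kernel_lip sigma K * (A + B) * / x ^ 3));
    [apply Rmult_le_compat_l; lra | right; field; lra]. }
assert (Rabs (dtail - x * douter) <= 6 * kernel_lip sigma K * (A + B) / x ^ 2).
{ eapply Rle_trans; [apply Rabs_triang |]. rewrite Rabs_Ropp.
  replace (6 * kernel_lip sigma K * (A + B) / x ^ 2)
    with (2 * kernel_lip sigma K * (A + B) / x ^ 2 + 4 * kernel_lip sigma K * (A + B) / x ^ 2)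
    by (field; lra).
  lra. }
rewrite Rabs_mult, Rabs_right by lra.
apply Rle_trans with (2 * (INR n - 1) * (6 * kernel_lip sigma K * (A + B) / x ^ 2));
  [apply Rmult_le_compat_l; lra | right; field; lra].
Qed.

Lemma C1norm_Tsig_dist n : 1 <= INR n ->
  Rbar_le (C1norm b (fun x => Tsig n sigma v2 x - Tsig n sigma v1 x))
          (16 * (INR n - 1) * kernel_lip sigma K * (A + B) / b).
Proof.
intros Hn. set (c := (INR n - 1) * kernel_lip sigma K * (A + B)).
assert (Hc : 0 <= c) by (unfold c; rewrite Rmult_assoc; apply Rmult_le_pos; lra).
replace (16 * (INR n - 1) * kernel_lip sigma K * (A + B) / b) with (4 * c / b + 12 * c / b)
  by (unfold c; field; lra).
apply C1norm_le; intros x Hx.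
- eapply Rle_trans; [apply Tsig_dist; lra |].
  replace (4 * (INR n - 1) * kernel_lip sigma K * (A + B)) with (4 * c) by (unfold c; ring).
  apply Rmult_le_compat_l; [lra |]. apply Rinv_le_contravar; lra.
- assert (Hder : forall v, admissible b K v -> ex_derive (Tsig n sigma v) x)
    by (intros v Hv; eexists; apply (Tsig_derive sigma b K); auto; lra).
  rewrite Derive_minus by auto.
  eapply Rle_trans; [apply Tsig_derive_dist; lra |].
  replace (12 * (INR n - 1) * kernel_lip sigma K * (A + B)) with (12 * c) by (unfold c; ring).
  assert (b <= x ^ 2) by (simpl; nra).
  apply Rmult_le_compat_l; [lra |]. apply Rinv_le_contravar; lra.
Qed.

End Difference.

Theorem proposition1 (n : nat) (sigma : R) :
  (2 <= n)%nat -> 0 < sigma ->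
  exists b0 : R, forall b : R, 0 < b -> b0 <= b ->
    (forall v, Yset n sigma b v -> forall x, b < x -> ex_derive (Tsig n sigma v) x) /\
    exists tau : R, 0 < tau < 1 /\
      forall v1 v2, Yset n sigma b v1 -> Yset n sigma b v2 ->
        Rbar_le (C1norm b (fun x => Tsig n sigma v2 x - Tsig n sigma v1 x))
                (Rbar_mult tau (C1norm b (fun x => v2 x - v1 x))).
Proof.
intros Hn Hsigma.
assert (HN : 2 <= INR n) by (apply (le_INR 2 n) in Hn; simpl in Hn; lra).
set (K := 4 * (INR n - 1) / sigma).
assert (HK : 0 <= K) by (apply Rdiv_le_0_compat; lra).
set (D := kernel_lip sigma K).
exists (Rmax 1 (32 * (INR n - 1) * D)). intros b _ Hb0.
pose proof (Rmax_l 1 (32 * (INR n - 1) * D)). pose proof (Rmax_r 1 (32 * (INR n - 1) * D)).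
assert (Hadm : forall v, Yset n sigma b v -> admissible b K v)
  by (intros v; apply Yset_admissible; lra).
split.
{ intros v Hv x Hx. eexists. apply (Tsig_derive sigma b K); auto; lra. }
exists (1 / 2). split; [lra |].
intros v1 v2 Y1 Y2. apply Rbar_le_mult_C1norm; [lra |]. intros A B HA HB.
assert (HdB : forall x, b < x -> Rabs (Derive v2 x - Derive v1 x) <= B).
{ intros x Hx. rewrite <- Derive_minus; [now apply HB | apply Y2 | apply Y1]; lra. }
eapply Rbar_le_trans; [apply (C1norm_Tsig_dist sigma b K A B v1 v2); auto; lra |].
assert (0 <= A + B).
{ pose proof (Rle_trans _ _ _ (Rabs_pos _) (HA b (Rle_refl b))).
  pose proof (Rle_trans _ _ _ (Rabs_pos _) (HdB (b + 1) ltac:(lra))). lra. }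
assert (32 * (INR n - 1) * D * (A + B) <= b * (A + B)) by (apply Rmult_le_compat_r; lra).
change (16 * (INR n - 1) * D * (A + B) / b <= 1 / 2 * (A + B)).
apply (Rmult_le_reg_r b); [lra |].
replace (16 * (INR n - 1) * D * (A + B) / b * b) with (16 * (INR n - 1) * D * (A + B))
  by (field; lra).
lra.
Qed.
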